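(* Let $R$ be a hyperdomain, $K=\operatorname{Frac}(R)$, $X=\operatorname{Spec}R$, and $\mathcal{O}_X$ the structure sheaf of $X$ with its pointwise multiplication and hyperaddition. Then: (1) For every $0\neq f\in R$, $\mathcal{O}_X(D(f))$ is a hyperring isomorphic to $R_f$; in particular $\mathcal{O}_X(X)=\Gamma(X,\mathcal{O}_X)\cong R$. (2) For every open $U\subseteq X$, $\mathcal{O}_X(U)$ is a hyperring, isomorphic to the sub-hyperring $Y(U):=\{u\in K\mid \text{for every }\mathfrak{p}\in U,\ u=\tfrac ab\text{ for some }a\in R,\ b\notin\mathfrak{p}\}$ of $K$; moreover, identifying each $R_f$ ($f\neq0$) with its image in $K$ under the canonical injection and $\mathcal{O}_X(D(f))$ with $R_f$ via (1), $\mathcal{O}_X(U)\cong\bigcap_{D(f)\subseteq U}\mathcal{O}_X(D(f))$. (3) For every $\mathfrak{p}\in X$, the stalk $\mathcal{O}_{X,\mathfrak{p}}=\varinjlim_{U\ni\mathfrak{p}}\mathcal{O}_X(U)$ exists in the category of hyperrings and is isomorphic to $R_\mathfrak{p}$.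
   Context: A hyperoperation $+:H\times H\to\mathcal{P}^*(H)$ is extended to subsets by $A+B=\bigcup_{a\in A,b\in B}(a+b)$. A (canonical) hypergroup is a nonempty set with a commutative associative hyperoperation, a unique $0$ with $0+x=\{x\}$, unique inverses $-x$ with $0\in x+(-x)$, and reversibility $x\in y+z\iff z\in x+(-y)$. A hyperring $(R,+,\cdot,0,1)$ is a hypergroup $(R,+,0)$ with a commutative monoid $(R,\cdot,1)$ such that $x(y+z)=xy+xz$, $0x=0$, $0\neq1$; homomorphisms satisfy $\varphi(a+b)\subseteq\varphi(a)+\varphi(b)$, $\varphi(ab)=\varphi(a)\varphi(b)$. A hyperdomain is a hyperring in which $xy=0$ implies $x=0$ or $y=0$. Hyperideals, prime hyperideals, $\operatorname{Spec}R$ with the Zariski topology (closed sets $V(I)=\{\mathfrak{p}\supseteq I\}$), and $D(f)=\{\mathfrak{p}\mid f\notin\mathfrak{p}\}$ are as for rings (a hyperideal is a nonempty $I$ with $a-rb\subseteq I$ for $a,b\in I$, $r\in R$). Localization: for a multiplicative submonoid $S\subseteq R$, $S^{-1}R$ is $R\times S$ modulo $(r_1,s_1)\sim(r_2,s_2)\iff xr_1s_2=xr_2s_1$ for some $x\in S$; with $\frac{r_1}{s_1}+\frac{r_2}{s_2}=\{\frac{y}{s_1s_2}\mid y\in r_1s_2+s_1r_2\}$ and $\frac{r_1}{s_1}\cdot\frac{r_2}{s_2}=\frac{r_1r_2}{s_1s_2}$. $R_\mathfrak{p}=(R\setminus\mathfrak{p})^{-1}R$, $R_f=\{1,f,f^2,\dots\}^{-1}R$,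 $K=\operatorname{Frac}(R)=(R\setminus\{0\})^{-1}R$. For open $U\subseteq X$, $\mathcal{O}_X(U)$ is the set of maps $s:U\to\bigsqcup_{\mathfrak{p}\in U}R_\mathfrak{p}$ with $s(\mathfrak{p})\in R_\mathfrak{p}$ such that each $\mathfrak{p}\in U$ has an open neighbourhood $V\subseteq U$ and $a,f\in R$ with $f\notin\mathfrak{q}$ and $s(\mathfrak{q})=\frac af$ in $R_\mathfrak{q}$ for all $\mathfrak{q}\in V$; restrictions are restrictions of maps; $(s\cdot t)(\mathfrak{p})=s(\mathfrak{p})t(\mathfrak{p})$ and $s+t=\{r\in\mathcal{O}_X(U)\mid r(\mathfrak{p})\in s(\mathfrak{p})+t(\mathfrak{p})\ \forall\mathfrak{p}\in U\}$. *)

From Stdlib Require Import ClassicalEpsilon.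


(** A hyperoperation a + b ⊆ T is encoded as a relation: [hadd a b c] means
    c ∈ a + b.  Structures are "relativised" to a carrier predicate [A : T -> Prop]
    inside an ambient type [T]; the hyperring is the set [A] with the operations
    restricted to it (in particular a+b is read as {c ∈ A | hadd a b c}).
    This is used for R itself (A = everything), localizations (A = equivalence
    classes), sub-hyperrings of K, and O_X(U) (A = sections). *)
Record hops (T : Type) := HOps {
  hadd : T -> T -> T -> Prop;
  hmul : T -> T -> T;
  hzero : T;
  hone : T }.

Arguments HOps {T}.
Arguments hadd {T}.
Arguments hmul {T}.
Arguments hzero {T}.
Arguments hone {T}.

Section Hyperring.
Variables (T : Type) (o : hops T) (A : T -> Prop).
Local Notation "x * y" := (hmul o x y).
Local Notation "0" := (hzero o).
Local Notation "1" := (hone o).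
Local Notation hadd := (hadd o).

Definition is_hyperring : Prop :=
  A 0 /\ A 1 /\ (forall a b, A a -> A b -> A (a * b)) /\
  (forall a b, A a -> A b -> exists c, A c /\ hadd a b c) /\
  (forall a b c, A a -> A b -> A c -> (hadd a b c <-> hadd b a c)) /\
  (forall a b c e, A a -> A b -> A c -> A e ->
     ((exists d, A d /\ hadd a b d /\ hadd d c e) <->
      (exists d, A d /\ hadd b c d /\ hadd a d e))) /\
  (forall x y, A x -> A y -> (hadd 0 x y <-> y = x)) /\
  (forall z, A z -> (forall x y, A x -> A y -> (hadd z x y <-> y = x)) -> z = 0) /\
  (forall x, A x -> exists y, A y /\ hadd x y 0 /\
                    (forall y', A y' -> hadd x y' 0 -> y' = y)) /\
  (forall x y z y', A x -> A y -> A z -> A y' -> hadd y y' 0 ->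
     (hadd y z x <-> hadd x y' z)) /\
  (forall a b c, A a -> A b -> A c -> a * (b * c) = (a * b) * c) /\
  (forall a b, A a -> A b -> a * b = b * a) /\
  (forall a, A a -> 1 * a = a) /\
  (forall x y z c, A x -> A y -> A z -> A c ->
     ((exists w, A w /\ hadd y z w /\ c = x * w) <-> hadd (x * y) (x * z) c)) /\
  (forall x, A x -> 0 * x = 0) /\
  0 <> 1.

Definition is_hyperdomain : Prop :=
  is_hyperring /\ (forall x y, A x -> A y -> x * y = 0 -> x = 0 \/ y = 0).

End Hyperring.
Arguments is_hyperring {T}.
Arguments is_hyperdomain {T}.

Definition is_sub_hyperring (T : Type) (o : hops T) (A B : T -> Prop) : Prop :=
  (forall x, B x -> A x) /\ B (hzero o) /\ B (hone o) /\
  (forall a b, B a -> B b -> B (hmul o a b)) /\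
  (forall a b c, B a -> B b -> A c -> hadd o a b c -> B c) /\
  (forall x y, B x -> A y -> hadd o x y (hzero o) -> B y) /\
  is_hyperring o B.

Definition is_hom (T1 : Type) (o1 : hops T1) (A1 : T1 -> Prop)
    (T2 : Type) (o2 : hops T2) (A2 : T2 -> Prop) (phi : T1 -> T2) : Prop :=
  (forall a, A1 a -> A2 (phi a)) /\
  (forall a b c, A1 a -> A1 b -> A1 c -> hadd o1 a b c ->
      hadd o2 (phi a) (phi b) (phi c)) /\
  (forall a b, A1 a -> A1 b -> phi (hmul o1 a b) = hmul o2 (phi a) (phi b)).

Arguments is_hom {T1} o1 A1 {T2}.

Definition hiso (T1 : Type) (o1 : hops T1) (A1 : T1 -> Prop)
    (T2 : Type) (o2 : hops T2) (A2 : T2 -> Prop) : Prop :=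
  exists (phi : T1 -> T2) (psi : T2 -> T1),
    is_hom o1 A1 o2 A2 phi /\ is_hom o2 A2 o1 A1 psi /\
    (forall a, A1 a -> psi (phi a) = a) /\ (forall b, A2 b -> phi (psi b) = b).

Arguments is_sub_hyperring {T}.

Arguments hiso {T1} o1 A1 {T2}.

Definition full (T : Type) : T -> Prop := fun _ => True.

Section Spec.
Variables (R : Type) (o : hops R).
Local Notation "x * y" := (hmul o x y).

(** nonempty I with a - rb ⊆ I for a, b ∈ I (n = -(rb) is the inverse of rb) *)
Definition is_hideal (I : R -> Prop) : Prop :=
  (exists a, I a) /\
  (forall a b r n c, I a -> I b -> hadd o (r * b) n (hzero o) ->
      hadd o a n c -> I c).

Definition is_prime (I : R -> Prop) : Prop :=
  is_hideal I /\ (exists x, ~ I x) /\ (forall a b, I (a * b) -> I a \/ I b).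

Definition spec : Type := { p : R -> Prop | is_prime p }.

Definition Vset (I : R -> Prop) : spec -> Prop :=
  fun p => forall x, I x -> proj1_sig p x.

Definition zopen (U : spec -> Prop) : Prop :=
  exists I, is_hideal I /\ forall p, U p <-> ~ Vset I p.

Definition Dset (f : R) : spec -> Prop := fun p => ~ proj1_sig p f.

(** * Localization S^{-1}R, elements = equivalence classes in R × S,
      represented as subsets of R * R. *)
Section Loc.
Variable S : R -> Prop.

Definition frel (p q : R * R) : Prop :=
  exists x, S x /\ x * fst p * snd q = x * fst q * snd p.

Definition cls (r s : R) : R * R -> Prop :=
  fun q => S (snd q) /\ frel (r, s) q.

Definition is_frac (C : R * R -> Prop) : Prop :=
  exists r s, S s /\ C = cls r s.

Definition rep (C : R * R -> Prop) : R * R :=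
  epsilon (inhabits (hzero o, hone o)) C.

Definition loc_ops : hops (R * R -> Prop) := HOps
  (fun C1 C2 C3 => exists r1 s1 r2 s2 y,
      C1 (r1, s1) /\ C2 (r2, s2) /\ hadd o (r1 * s2) (s1 * r2) y /\
      C3 = cls y (s1 * s2))
  (fun C1 C2 => cls (fst (rep C1) * fst (rep C2)) (snd (rep C1) * snd (rep C2)))
  (cls (hzero o) (hone o))
  (cls (hone o) (hone o)).
End Loc.

Fixpoint hpow (f : R) (n : nat) : R :=
  match n with O => hone o | Datatypes.S m => f * hpow f m end.

Definition Sprime (p : spec) : R -> Prop := fun x => ~ proj1_sig p x.
Definition Spow (f : R) : R -> Prop := fun x => exists n, x = hpow f n.
Definition Snz : R -> Prop := fun x => x <> hzero o.

(** R_f inside K = Frac R: the image {a / f^n} of the canonical injection. *)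
Definition image_Rf (f : R) : (R * R -> Prop) -> Prop :=
  fun u => is_frac Snz u /\ exists a n, u (a, hpow f n).

Definition Yset (U : spec -> Prop) : (R * R -> Prop) -> Prop :=
  fun u => is_frac Snz u /\
    forall p : spec, U p -> exists a b, ~ proj1_sig p b /\ u = cls Snz a b.

Definition Inter_Rf (U : spec -> Prop) : (R * R -> Prop) -> Prop :=
  fun u => is_frac Snz u /\
    forall f, f <> hzero o -> (forall p, Dset f p -> U p) -> image_Rf f u.

(** * The structure sheaf. Sections over U are maps on {p ∈ U} with
      s(p) ∈ R_p. *)
Definition secT (U : spec -> Prop) : Type := { p : spec | U p } -> (R * R -> Prop).

Definition is_section (U : spec -> Prop) (s : secT U) : Prop :=
  (forall q, is_frac (Sprime (proj1_sig q)) (s q)) /\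
  (forall q : { p : spec | U p }, exists V, zopen V /\ V (proj1_sig q) /\
      (forall p, V p -> U p) /\
      exists a f, forall q' : { p : spec | U p }, V (proj1_sig q') ->
        ~ proj1_sig (proj1_sig q') f /\
        s q' = cls (Sprime (proj1_sig q')) a f).

Definition sec_ops (U : spec -> Prop) : hops (secT U) := HOps
  (fun s t r => forall q, hadd (loc_ops (Sprime (proj1_sig q))) (s q) (t q) (r q))
  (fun s t => fun q => hmul (loc_ops (Sprime (proj1_sig q))) (s q) (t q))
  (fun q => hzero (loc_ops (Sprime (proj1_sig q))))
  (fun q => hone (loc_ops (Sprime (proj1_sig q)))).

Definition restr (U V : spec -> Prop) (HVU : forall p, V p -> U p) (s : secT U)
  : secT V := fun q => s (exist _ (proj1_sig q) (HVU _ (proj2_sig q))).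

Section Stalk.
Variable p : spec.
Definition nbhd (U : spec -> Prop) : Prop := zopen U /\ U p.

Definition is_cocone (T : Type) (oT : hops T) (AT : T -> Prop)
    (phi : forall U, secT U -> T) : Prop :=
  (forall U, nbhd U -> is_hom (sec_ops U) (is_section U) oT AT (phi U)) /\
  (forall U V (HVU : forall q, V q -> U q), nbhd U -> nbhd V ->
     forall s, is_section U s -> phi U s = phi V (restr U V HVU s)).

Definition factors (T : Type) (phi : forall U, secT U -> T)
    (T' : Type) (psi : forall U, secT U -> T') (h : T -> T') : Prop :=
  forall U, nbhd U -> forall s, is_section U s -> psi U s = h (phi U s).

Definition is_stalk_colimit (L : Type) (oL : hops L) (AL : L -> Prop)
    (phi : forall U, secT U -> L) : Prop :=
  is_hyperring oL AL /\ is_cocone L oL AL phi /\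
  forall (T' : Type) (oT : hops T') (AT : T' -> Prop) (psi : forall U, secT U -> T'),
    is_hyperring oT AT -> is_cocone T' oT AT psi ->
    (exists h, is_hom oL AL oT AT h /\ factors L phi T' psi h) /\
    (forall h1 h2, is_hom oL AL oT AT h1 -> is_hom oL AL oT AT h2 ->
       factors L phi T' psi h1 -> factors L phi T' psi h2 ->
       forall x, AL x -> h1 x = h2 x).
End Stalk.
End Spec.
Arguments is_hideal {R} o.
Arguments is_prime {R} o.
Arguments spec {R} o.
Arguments Vset {R} o.
Arguments zopen {R} o.
Arguments Dset {R} o.
Arguments frel {R} o.
Arguments cls {R} o.
Arguments is_frac {R} o.
Arguments rep {R} o.
Arguments loc_ops {R} o.
Arguments hpow {R} o.
Arguments Sprime {R} o.
Arguments Spow {R} o.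
Arguments Snz {R} o.
Arguments image_Rf {R} o.
Arguments Yset {R} o.
Arguments Inter_Rf {R} o.
Arguments secT {R} o.
Arguments is_section {R} o.
Arguments sec_ops {R} o.
Arguments restr {R} o.
Arguments nbhd {R} o.
Arguments is_cocone {R} o.
Arguments factors {R} o.
Arguments is_stalk_colimit {R} o p {L}.

From mathcomp Require classical_sets.
From Stdlib Require Import ClassicalEpsilon Classical FunctionalExtensionality PropExtensionality.
From Stdlib Require Import List Permutation.

(* Since [R] is a hyperdomain, every localization [S^{-1}R] with [0 ∉ S] embeds
   in [K = Frac R], and every nonempty open set contains the generic point (0).
   A section over [U] is therefore determined by its value at (0): an element
   [u] of [K] which, at each [p ∈ U], can be written [a/b] with [b ∉ p].  This
   identifies [O_X(U)] with [Y(U)] and transports the hyperring structure of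
   [K].  For [U = D(f)], prime avoidance (Zorn) shows that the denominators of
   such a [u] contain a power of [f], so [Y(D(f)) = R_f]; for [f = 1] this is
   [R].  The stalk at [p] is [R_p]: the germ of a section is its value at [p],
   and a cocone is lifted to [R_p] by evaluating it on [D(b)] at [a/b]. *)

(** * Normalisation in commutative monoids *)

Section CommMonoidReflection.
Variables (T : Type) (mul : T -> T -> T) (one : T).
Hypothesis mulA : forall a b c, mul a (mul b c) = mul (mul a b) c.
Hypothesis mulC : forall a b, mul a b = mul b a.
Hypothesis mul1 : forall a, mul one a = a.

Inductive mon_expr := MAtom (n : nat) | MMul (a b : mon_expr) | MOne.

Fixpoint mon_eval (env : list T) (e : mon_expr) : T :=
  match e with
  | MAtom n => nth n env one
  | MMul a b => mul (mon_eval env a) (mon_eval env b)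
  | MOne => one
  end.

Fixpoint mon_atoms (e : mon_expr) : list nat :=
  match e with MAtom n => n :: nil | MMul a b => mon_atoms a ++ mon_atoms b | MOne => nil end.

Definition atoms_eval (env : list T) (l : list nat) : T :=
  fold_right (fun n acc => mul (nth n env one) acc) one l.

Lemma atoms_eval_app env l1 l2 :
  atoms_eval env (l1 ++ l2) = mul (atoms_eval env l1) (atoms_eval env l2).
Proof. induction l1; simpl. - now rewrite mul1. - now rewrite IHl1, mulA. Qed.

Lemma mon_eval_atoms env e : mon_eval env e = atoms_eval env (mon_atoms e).
Proof.
  induction e; simpl.
  - now rewrite mulC, mul1.
  - now rewrite atoms_eval_app, IHe1, IHe2.
  - reflexivity.
Qed.

Lemma atoms_eval_perm env l1 l2 : Permutation l1 l2 -> atoms_eval env l1 = atoms_eval env l2.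
Proof.
  induction 1; simpl; try congruence.
Qed.

Fixpoint insert_sorted (n : nat) (l : list nat) : list nat :=
  match l with
  | nil => n :: nil
  | m :: r => if Nat.leb n m then n :: m :: r else m :: insert_sorted n r
  end.

Fixpoint sort_atoms (l : list nat) : list nat :=
  match l with nil => nil | n :: r => insert_sorted n (sort_atoms r) end.

Lemma insert_sorted_perm n l : Permutation (n :: l) (insert_sorted n l).
Proof.
  induction l; simpl; auto.
  destruct (Nat.leb n a); auto.
  eapply perm_trans; [apply perm_swap | auto].
Qed.

Lemma sort_atoms_perm l : Permutation l (sort_atoms l).
Proof.
  induction l; simpl; auto.
  eapply perm_trans; [apply perm_skip, IHl | apply insert_sorted_perm].
Qed.

Lemma mon_eval_sorted env e1 e2 :
  sort_atoms (mon_atoms e1) = sort_atoms (mon_atoms e2) -> mon_eval env e1 = mon_eval env e2.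
Proof.
  intro h. rewrite !mon_eval_atoms.
  rewrite (atoms_eval_perm env _ _ (sort_atoms_perm (mon_atoms e1))), h.
  symmetry; apply atoms_eval_perm, sort_atoms_perm.
Qed.
End CommMonoidReflection.

Lemma hom_comp T1 (o1 : hops T1) A1 T2 (o2 : hops T2) A2 T3 (o3 : hops T3) A3 f g :
  is_hom o1 A1 o2 A2 f -> is_hom o2 A2 o3 A3 g -> is_hom o1 A1 o3 A3 (fun x => g (f x)).
Proof.
  intros [fA [fadd fmul]] [gA [gadd gmul]]. split; [auto | split; [auto |]].
  intros; rewrite fmul, gmul; auto.
Qed.

Lemma hiso_refl T (o : hops T) A : hiso o A o A.
Proof.
  exists (fun x => x), (fun x => x).
  assert (hid : is_hom o A o A (fun x => x)) by (split; auto).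
  split; auto.
Qed.

Lemma hiso_trans T1 (o1 : hops T1) A1 T2 (o2 : hops T2) A2 T3 (o3 : hops T3) A3 :
  hiso o1 A1 o2 A2 -> hiso o2 A2 o3 A3 -> hiso o1 A1 o3 A3.
Proof.
  intros [f [f' [hf [hf' [ff' f'f]]]]] [g [g' [hg [hg' [gg' g'g]]]]].
  exists (fun x => g (f x)), (fun x => f' (g' x)).
  split; [eapply hom_comp; eauto |].
  split; [eapply hom_comp; eauto |].
  split.
  - intros a ha. rewrite gg'; auto. apply hf; auto.
  - intros b hb. rewrite f'f; auto. apply hg'; auto.
Qed.

Section HyperringOfIso.
Variables (T1 : Type) (o1 : hops T1) (A1 : T1 -> Prop).
Variables (T2 : Type) (o2 : hops T2) (A2 : T2 -> Prop).
Variables (phi : T1 -> T2) (psi : T2 -> T1).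
Hypothesis H2 : is_hyperring o2 A2.
Hypothesis hphi : is_hom o1 A1 o2 A2 phi.
Hypothesis hpsi : is_hom o2 A2 o1 A1 psi.
Hypothesis psi_phi : forall a, A1 a -> psi (phi a) = a.
Hypothesis phi_psi : forall b, A2 b -> phi (psi b) = b.
Hypothesis A1_zero : A1 (hzero o1).
Hypothesis A1_one : A1 (hone o1).
Hypothesis phi_zero : phi (hzero o1) = hzero o2.
Hypothesis phi_one : phi (hone o1) = hone o2.

Let Hphi a : A1 a -> A2 (phi a). Proof. apply hphi. Qed.
Let Hpsi b : A2 b -> A1 (psi b). Proof. apply hpsi. Qed.
Let Hmul a b : A1 a -> A1 b -> phi (hmul o1 a b) = hmul o2 (phi a) (phi b).
Proof. apply hphi. Qed.

Let inj a b : A1 a -> A1 b -> phi a = phi b -> a = b.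
Proof. intros ha hb e. now rewrite <- (psi_phi a), <- (psi_phi b), e. Qed.

Let Hadd a b c : A1 a -> A1 b -> A1 c ->
  (hadd o1 a b c <-> hadd o2 (phi a) (phi b) (phi c)).
Proof.
  intros ha hb hc. split; [apply hphi; auto |].
  intro h. rewrite <- (psi_phi a), <- (psi_phi b), <- (psi_phi c) by auto.
  apply hpsi; auto.
Qed.

Let Hmc a b : A1 a -> A1 b -> A1 (hmul o1 a b).
Proof.
  intros ha hb. rewrite <- (psi_phi a), <- (psi_phi b) by auto.
  destruct hpsi as [_ [_ psi_mul]]. rewrite <- psi_mul by auto.
  apply Hpsi, H2; auto.
Qed.

Lemma is_hyperring_of_iso : is_hyperring o1 A1.
Proof.
  destruct H2 as [G0 [G1 [Gmc [Gex [Gcomm [Gass [Gz [Gzu [Ginv [Grev [GmA [GmC [Gm1 [Gdist [Gm0 G01]]]]]]]]]]]]]]].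
  split; auto. split; auto. split; auto.
  split. { intros a b ha hb. destruct (Gex _ _ (Hphi a ha) (Hphi b hb)) as [c [hc h]].
    exists (psi c). split; auto. apply Hadd; auto. rewrite phi_psi; auto. }
  split. { intros a b c ha hb hc. rewrite !Hadd by auto. apply Gcomm; auto. }
  split. { intros a b c e ha hb hc he.
    destruct (Gass _ _ _ _ (Hphi a ha) (Hphi b hb) (Hphi c hc) (Hphi e he)) as [Gl Gr].
    split; intros [d [hd [h1 h2]]]; apply Hadd in h1; auto; apply Hadd in h2; auto.
    - destruct Gl as [d2 [hd2 [h3 h4]]]; [exists (phi d); auto |].
      exists (psi d2). split; auto. rewrite !Hadd, phi_psi; auto.
    - destruct Gr as [d2 [hd2 [h3 h4]]]; [exists (phi d); auto |].
      exists (psi d2). split; auto. rewrite !Hadd, phi_psi; auto. }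
  split. { intros x y hx hy. rewrite Hadd, phi_zero, Gz by auto.
    split; [apply inj; auto | intros ->; auto]. }
  split. { intros z hz hP. apply inj; auto. rewrite phi_zero. apply Gzu; auto.
    intros x y hx hy. rewrite <- (phi_psi x), <- (phi_psi y), <- Hadd, hP by auto.
    split; [intros ->; auto | intro e; rewrite <- (phi_psi x), <- (phi_psi y), e; auto]. }
  split. { intros x hx. destruct (Ginv _ (Hphi x hx)) as [y [hy [h hu]]].
    exists (psi y). split; auto. split.
    - apply Hadd; auto. rewrite phi_psi, phi_zero; auto.
    - intros y' hy' h'. apply inj; auto. rewrite phi_psi; auto.
      apply hu; auto. rewrite <- phi_zero. apply Hadd; auto. }
  split. { intros x y z y' hx hy hz hy' hn. rewrite !Hadd by auto.
    apply Grev; auto. rewrite <- phi_zero. apply Hadd; auto. }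
  split. { intros a b c ha hb hc. apply inj; auto. rewrite !Hmul; auto. }
  split. { intros a b ha hb. apply inj; auto. rewrite !Hmul; auto. }
  split. { intros a ha. apply inj; auto. rewrite Hmul, phi_one; auto. }
  split. { intros x y z c hx hy hz hc. rewrite Hadd, !Hmul, <- Gdist by auto. split.
    - intros [w [hw [h ->]]]. exists (phi w). split; auto. split; [apply Hadd; auto | auto].
    - intros [w [hw [h e]]]. exists (psi w). split; auto. split.
      + apply Hadd; auto. rewrite phi_psi; auto.
      + apply inj; auto. rewrite Hmul, phi_psi; auto. }
  split. { intros x hx. apply inj; auto. rewrite Hmul, phi_zero; auto. }
  intro e. apply G01. now rewrite <- phi_zero, <- phi_one, e.
Qed.
End HyperringOfIso.

(** * Hyperdomains and their localizations *)

Section Hyperdomain.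
Variables (R : Type) (o : hops R).
Hypothesis HD : is_hyperdomain o (full R).

Local Notation "x * y" := (hmul o x y).
Local Notation zero := (hzero o).
Local Notation one := (hone o).
Local Notation add := (hadd o).

Ltac unpack_hyperdomain :=
  destruct HD as [[H0 [H1 [Hmc [Hex [Hcomm [Hass [Hz [Hzu [Hinv [Hrev
                  [HmA [HmC [Hm1 [Hdist [Hm0 H01]]]]]]]]]]]]]]] Hdom].

Lemma addC a b c : add a b c -> add b a c.
Proof. unpack_hyperdomain. intro; apply Hcomm; try exact I; auto. Qed.

Lemma add0l x y : add zero x y <-> y = x.
Proof. unpack_hyperdomain. apply Hz; exact I. Qed.

Lemma add_nonempty a b : exists c, add a b c.
Proof. unpack_hyperdomain. destruct (Hex a b I I) as [c [_ hc]]; eauto. Qed.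

Lemma addA a b c e :
  (exists d, add a b d /\ add d c e) <-> (exists d, add b c d /\ add a d e).
Proof.
  unpack_hyperdomain. destruct (Hass a b c e I I I I) as [X Y].
  split; intros [d [h1 h2]].
  - destruct X as [d' [_ [? ?]]]; [exists d; repeat split; auto; exact I | eauto].
  - destruct Y as [d' [_ [? ?]]]; [exists d; repeat split; auto; exact I | eauto].
Qed.

Lemma mulA a b c : a * (b * c) = (a * b) * c. Proof. unpack_hyperdomain. apply HmA; exact I. Qed.
Lemma mulC a b : a * b = b * a. Proof. unpack_hyperdomain. apply HmC; exact I. Qed.
Lemma mul1 a : one * a = a. Proof. unpack_hyperdomain. apply Hm1; exact I. Qed.
Lemma mulr1 a : a * one = a. Proof. rewrite mulC; apply mul1. Qed.
Lemma mul0 a : zero * a = zero. Proof. unpack_hyperdomain. apply Hm0; exact I. Qed.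
Lemma mulr0 a : a * zero = zero. Proof. rewrite mulC; apply mul0. Qed.
Lemma zero_neq_one : zero <> one. Proof. unpack_hyperdomain. auto. Qed.

Lemma mul_eq0 x y : x * y = zero -> x = zero \/ y = zero.
Proof. unpack_hyperdomain. apply Hdom; exact I. Qed.

Lemma mul_neq0 x y : x <> zero -> y <> zero -> x * y <> zero.
Proof. intros hx hy e; destruct (mul_eq0 _ _ e); auto. Qed.

Lemma mul_addr x y z c : (exists w, add y z w /\ c = x * w) <-> add (x * y) (x * z) c.
Proof.
  unpack_hyperdomain. destruct (Hdist x y z c I I I I) as [X Y]. split.
  - intros [w [h1 h2]]; apply X; exists w; repeat split; auto.
  - intro h; destruct (Y h) as [w [_ ?]]; eauto.
Qed.

Lemma add_mull x y z w : add y z w -> add (x * y) (x * z) (x * w).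
Proof. intro; apply mul_addr; eauto. Qed.

Definition neg (x : R) : R := epsilon (inhabits zero) (fun y => add x y zero).

Lemma add_neg x : add x (neg x) zero.
Proof.
  unpack_hyperdomain. unfold neg. apply epsilon_spec.
  destruct (Hinv x I) as [y [_ [h _]]]; eauto.
Qed.

Lemma neg_unique x y : add x y zero -> y = neg x.
Proof.
  unpack_hyperdomain. intro h. destruct (Hinv x I) as [y0 [_ [_ hu]]].
  rewrite (hu y I h), (hu (neg x) I (add_neg x)); auto.
Qed.

Lemma negK x : neg (neg x) = x.
Proof. symmetry; apply neg_unique, addC, add_neg. Qed.

Lemma mulrN x y : x * neg y = neg (x * y).
Proof. apply neg_unique. rewrite <- (mulr0 x). apply add_mull, add_neg. Qed.

Lemma mulNr x y : neg x * y = neg (x * y).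
Proof. now rewrite mulC, mulrN, mulC. Qed.

Lemma add_reverse x y z : add y z x <-> add x (neg y) z.
Proof. unpack_hyperdomain. apply Hrev; try exact I. apply add_neg. Qed.

Lemma mulI x a b : x <> zero -> x * a = x * b -> a = b.
Proof.
  intros hx h.
  assert (hd : add (x * a) (x * neg b) zero) by (rewrite h, mulrN; apply add_neg).
  apply mul_addr in hd. destruct hd as [w [hw e]].
  destruct (mul_eq0 _ _ (eq_sym e)) as [| ->]; [contradiction |].
  rewrite <- (negK b). apply neg_unique, addC; auto.
Qed.

Ltac find_atom x l :=
  lazymatch l with nil => constr:(false) | cons x _ => constr:(true) | cons _ ?r => find_atom x r end.
Ltac collect_atoms e l :=
  lazymatch e with
  | hmul o ?a ?b => let l1 := collect_atoms a l in collect_atoms b l1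
  | hone o => l
  | _ => let b := find_atom e l in
         lazymatch b with true => l | false => constr:(cons e l) end
  end.
Ltac atom_index x l :=
  lazymatch l with cons x _ => constr:(O) | cons _ ?r => let n := atom_index x r in constr:(S n) end.
Ltac reify e env :=
  lazymatch e with
  | hmul o ?a ?b => let ra := reify a env in let rb := reify b env in constr:(MMul ra rb)
  | hone o => constr:(MOne)
  | _ => let n := atom_index e env in constr:(MAtom n)
  end.

Ltac monoid_eq :=
  lazymatch goal with |- ?a = ?b =>
    let l := collect_atoms a (@nil R) in let l := collect_atoms b l in
    let ra := reify a l in let rb := reify b l in
    change (mon_eval _ (hmul o) (hone o) l ra = mon_eval _ (hmul o) (hone o) l rb);
    apply (mon_eval_sorted _ _ _ mulA mulC mul1); reflexivity
  end.

Definition nz_mult_system (S : R -> Prop) : Prop :=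
  S one /\ (forall a b, S a -> S b -> S (a * b)) /\ (forall a, S a -> a <> zero).

Section Localization.
Variable S : R -> Prop.
Hypothesis HS : nz_mult_system S.
Let S1 : S one. Proof. apply HS. Qed.
Let SM a b : S a -> S b -> S (a * b). Proof. apply HS. Qed.
Let S_neq0 a : S a -> a <> zero. Proof. apply HS. Qed.
Local Hint Resolve S1 SM : core.
Local Notation cls := (cls o S).
Local Notation ladd := (hadd (loc_ops o S)).

Lemma in_clsE a b r s : S b -> (cls a b (r, s) <-> S s /\ a * s = r * b).
Proof.
  intro hb. unfold cls, frel; simpl. split.
  - intros [hs [x [hx e]]]. split; auto. apply (mulI x); auto. now rewrite !mulA.
  - intros [hs e]. split; auto. exists one; split; auto. now rewrite !mul1.
Qed.

Lemma in_cls_refl a b : S b -> cls a b (a, b).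
Proof. intro. apply in_clsE; auto. Qed.

Lemma cls_eqE a b c d : S b -> S d -> (cls a b = cls c d <-> a * d = c * b).
Proof.
  intros hb hd. split.
  - intro e. assert (h := in_cls_refl c d hd). rewrite <- e in h.
    apply in_clsE in h; tauto.
  - intro e. apply functional_extensionality; intros [r s]. apply propositional_extensionality.
    rewrite (in_clsE _ _ _ _ hb), (in_clsE _ _ _ _ hd).
    split; intros [hs e']; split; auto.
    + apply (mulI b); auto. transitivity (d * (a * s)); [| rewrite e'; monoid_eq].
      transitivity ((a * d) * s); [rewrite e |]; monoid_eq.
    + apply (mulI d); auto. transitivity (b * (c * s)); [| rewrite e'; monoid_eq].
      transitivity ((c * b) * s); [rewrite <- e |]; monoid_eq.
Qed.

Lemma cls_of_in a b r s : S b -> cls a b (r, s) -> cls a b = cls r s.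
Proof. intros hb h. apply in_clsE in h; auto. destruct h as [hs e]. apply cls_eqE; auto. Qed.

Lemma is_frac_cls a b : S b -> is_frac o S (cls a b).
Proof. intro; exists a, b; auto. Qed.
Local Hint Resolve is_frac_cls : core.

Lemma frac_repE C : is_frac o S C ->
  C = cls (fst (rep o C)) (snd (rep o C)) /\ S (snd (rep o C)).
Proof.
  intros [a [b [hb ->]]].
  assert (hr : cls a b (rep o (cls a b))).
  { unfold rep. apply epsilon_spec. exists (a, b). apply in_cls_refl; auto. }
  destruct (rep o (cls a b)) as [r s]. simpl.
  split; [apply cls_of_in; auto | apply in_clsE in hr; tauto].
Qed.

Lemma mul_cls a b c d : S b -> S d -> hmul (loc_ops o S) (cls a b) (cls c d) = cls (a * c) (b * d).
Proof.
  intros hb hd. simpl.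
  destruct (frac_repE (cls a b)) as [e1 h1]; auto.
  destruct (frac_repE (cls c d)) as [e2 h2]; auto.
  destruct (rep o (cls a b)) as [a' b'], (rep o (cls c d)) as [c' d']. simpl in *.
  apply cls_eqE in e1; auto. apply cls_eqE in e2; auto.
  apply cls_eqE; auto. transitivity ((a' * b) * (c' * d)); [monoid_eq |].
  rewrite <- e1, <- e2. monoid_eq.
Qed.

Lemma add_clsE a b c d C : S b -> S d ->
  (ladd (cls a b) (cls c d) C <-> exists y, add (a * d) (b * c) y /\ C = cls y (b * d)).
Proof.
  intros hb hd. simpl. split.
  - intros [r1 [s1 [r2 [s2 [y [h1 [h2 [hy ->]]]]]]]].
    apply in_clsE in h1; auto. apply in_clsE in h2; auto.
    destruct h1 as [hs1 e1], h2 as [hs2 e2].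
    assert (hs : add ((s1 * s2) * (a * d)) ((s1 * s2) * (b * c)) ((b * d) * y)).
    { replace ((s1 * s2) * (a * d)) with ((b * d) * (r1 * s2))
        by (transitivity ((a * s1) * (d * s2)); [rewrite e1 |]; monoid_eq).
      replace ((s1 * s2) * (b * c)) with ((b * d) * (s1 * r2))
        by (transitivity ((b * s1) * (c * s2)); [rewrite e2 |]; monoid_eq).
      apply add_mull; auto. }
    apply mul_addr in hs. destruct hs as [w [hw e]]. exists w; split; auto.
    apply cls_eqE; auto. transitivity ((b * d) * y); [monoid_eq | rewrite e; monoid_eq].
  - intros [y [hy ->]]. exists a, b, c, d, y. repeat split; auto; apply in_cls_refl; auto.
Qed.

Lemma add_cls a b c d y : S b -> S d -> add (a * d) (b * c) y -> ladd (cls a b) (cls c d) (cls y (b * d)).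
Proof. intros hb hd hy. apply add_clsE; eauto. Qed.

Local Notation lzero := (hzero (loc_ops o S)).
Local Notation lmul := (hmul (loc_ops o S)).
Local Notation frac := (is_frac o S).

Lemma loc_add_frac X Y Z : frac X -> frac Y -> ladd X Y Z -> frac Z.
Proof.
  intros [a [b [hb ->]]] [c [d [hd ->]]] h.
  apply add_clsE in h; auto. destruct h as [y [_ ->]]. auto.
Qed.

Lemma loc_mul_frac X Y : frac X -> frac Y -> frac (lmul X Y).
Proof. intros [a [b [hb ->]]] [c [d [hd ->]]]. rewrite mul_cls; auto. Qed.

Lemma loc_addC X Y Z : frac X -> frac Y -> (ladd X Y Z <-> ladd Y X Z).
Proof.
  intros [a [b [hb ->]]] [c [d [hd ->]]]. rewrite !add_clsE by auto.
  split; intros [y [hy ->]]; exists y; split;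
    solve [apply addC; replace (c * b) with (b * c) by monoid_eq;
           replace (d * a) with (a * d) by monoid_eq; auto
          |apply addC; replace (b * c) with (c * b) by monoid_eq;
           replace (a * d) with (d * a) by monoid_eq; auto
          |apply cls_eqE; auto; monoid_eq].
Qed.

Lemma loc_add0 X Y : frac X -> (ladd lzero X Y <-> Y = X).
Proof.
  intros [a [b [hb ->]]]. simpl hzero. rewrite add_clsE by auto. split.
  - intros [y [hy ->]]. rewrite mul0, mul1 in hy. apply add0l in hy; auto. subst.
    apply cls_eqE; auto. monoid_eq.
  - intros ->. exists a. rewrite mul0, mul1. split; [apply add0l; auto |].
    apply cls_eqE; auto. monoid_eq.
Qed.

Lemma loc_add_neg a b : S b -> ladd (cls a b) (cls (neg a) b) lzero.
Proof.
  intro hb. simpl hzero. apply add_clsE; auto. exists zero. split.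
  - rewrite mulrN, (mulC a b). apply add_neg.
  - apply cls_eqE; auto. now rewrite !mul0.
Qed.

Lemma loc_neg_unique a b Y : S b -> frac Y -> ladd (cls a b) Y lzero -> Y = cls (neg a) b.
Proof.
  intros hb [c [d [hd ->]]]. simpl hzero. rewrite add_clsE by auto. intros [y [hy e]].
  apply cls_eqE in e; auto. rewrite mul0, mulr1 in e. subst y.
  apply neg_unique in hy. apply cls_eqE; auto. rewrite mulNr, <- hy. monoid_eq.
Qed.

Lemma loc_addA_l X Y Z E : frac X -> frac Y -> frac Z ->
  (exists D, ladd X Y D /\ ladd D Z E) -> exists D, ladd Y Z D /\ ladd X D E.
Proof.
  intros [a [b [hb ->]]] [a0 [b0 [hb0 ->]]] [a1 [b1 [hb1 ->]]] [D [h1 h2]].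
  apply add_clsE in h1; auto. destruct h1 as [y [hy ->]].
  apply add_clsE in h2; auto. destruct h2 as [z [hz ->]].
  destruct (proj1 (addA (b1 * (a * b0)) (b1 * (b * a0)) ((b * b0) * a1) z))
    as [w [hw hz2]].
  { exists (b1 * y). split; [apply add_mull; auto | now rewrite mulC]. }
  replace (b1 * (b * a0)) with (b * (a0 * b1)) in hw by monoid_eq.
  replace ((b * b0) * a1) with (b * (b0 * a1)) in hw by monoid_eq.
  apply mul_addr in hw. destruct hw as [w' [hw' ->]].
  exists (cls w' (b0 * b1)). split; [apply add_cls; auto |].
  apply add_clsE; auto. exists z. split.
  - replace (a * (b0 * b1)) with (b1 * (a * b0)) by monoid_eq; auto.
  - apply cls_eqE; auto. monoid_eq.
Qed.

Lemma loc_addA_r X Y Z E : frac X -> frac Y -> frac Z ->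
  (exists D, ladd Y Z D /\ ladd X D E) -> exists D, ladd X Y D /\ ladd D Z E.
Proof.
  intros [a [b [hb ->]]] [a0 [b0 [hb0 ->]]] [a1 [b1 [hb1 ->]]] [D [h1 h2]].
  apply add_clsE in h1; auto. destruct h1 as [w [hw ->]].
  apply add_clsE in h2; auto. destruct h2 as [z [hz ->]].
  destruct (proj2 (addA (a * (b0 * b1)) (b * (a0 * b1)) (b * (b0 * a1)) z))
    as [d0 [hd hz2]].
  { exists (b * w). split; [apply add_mull |]; auto. }
  replace (a * (b0 * b1)) with (b1 * (a * b0)) in hd by monoid_eq.
  replace (b * (a0 * b1)) with (b1 * (b * a0)) in hd by monoid_eq.
  apply mul_addr in hd. destruct hd as [y [hy ->]].
  exists (cls y (b * b0)). split; [apply add_cls; auto |].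
  apply add_clsE; auto. exists z. split.
  - replace (y * b1) with (b1 * y) by monoid_eq.
    replace (b * b0 * a1) with (b * (b0 * a1)) by monoid_eq; auto.
  - apply cls_eqE; auto. monoid_eq.
Qed.

Lemma loc_add_reverse X Y Z Y' : frac X -> frac Y -> frac Z -> frac Y' -> ladd Y Y' lzero ->
  (ladd Y Z X <-> ladd X Y' Z).
Proof.
  intros [x [s [hs ->]]] [y [t [ht ->]]] [z [u [hu ->]]] hY' hn.
  rewrite (loc_neg_unique _ _ _ ht hY' hn), !add_clsE by auto. split.
  - intros [w [hw e]]. apply cls_eqE in e; auto.
    apply (add_mull s) in hw.
    replace (s * w) with (u * (x * t)) in hw
      by (transitivity (w * s); [rewrite <- e |]; monoid_eq).
    apply add_reverse in hw.
    replace (neg (s * (y * u))) with (u * (s * neg y)) in hw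
      by (rewrite !mulrN; f_equal; monoid_eq).
    apply mul_addr in hw. destruct hw as [v [hv e2]].
    exists v. split; auto. apply cls_eqE; auto.
    transitivity (s * (t * z)); [monoid_eq | rewrite e2; monoid_eq].
  - intros [v [hv e]]. apply cls_eqE in e; auto.
    apply (add_mull u) in hv.
    replace (u * v) with (s * (t * z)) in hv
      by (transitivity (v * u); [rewrite <- e |]; monoid_eq).
    replace (u * (s * neg y)) with (neg (s * (y * u))) in hv
      by (rewrite !mulrN; f_equal; monoid_eq).
    replace (u * (x * t)) with (x * (t * u)) in hv by monoid_eq.
    apply add_reverse, mul_addr in hv. destruct hv as [w [hw e2]].
    exists w. split; auto. apply cls_eqE; auto. rewrite e2; monoid_eq.
Qed.

Lemma loc_mul_addr X Y Z C : frac X -> frac Y -> frac Z ->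
  (exists W, ladd Y Z W /\ C = lmul X W) <-> ladd (lmul X Y) (lmul X Z) C.
Proof.
  intros [x [s [hs ->]]] [y [t [ht ->]]] [z [u [hu ->]]].
  rewrite !mul_cls, add_clsE by auto.
  replace (x * y * (s * u)) with ((x * s) * (y * u)) by monoid_eq.
  replace (s * t * (x * z)) with ((x * s) * (t * z)) by monoid_eq. split.
  - intros [W [hW ->]]. apply add_clsE in hW; auto. destruct hW as [w [hw ->]].
    rewrite mul_cls by auto. exists ((x * s) * w). split; [apply add_mull; auto |].
    apply cls_eqE; auto. monoid_eq.
  - intros [v [hv ->]]. apply mul_addr in hv. destruct hv as [w [hw ->]].
    exists (cls w (t * u)). split; [apply add_cls; auto |].
    rewrite mul_cls by auto. apply cls_eqE; auto. monoid_eq.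
Qed.

Section SubLocalization.
Variable B : (R * R -> Prop) -> Prop.
Hypothesis B_frac : forall C, B C -> frac C.
Hypothesis B_zero : B (cls zero one).
Hypothesis B_one : B (cls one one).
Hypothesis B_mul : forall C D, B C -> B D -> B (lmul C D).
Hypothesis B_add : forall C D E, B C -> B D -> frac E -> ladd C D E -> B E.
Hypothesis B_neg : forall C D, B C -> frac D -> ladd C D lzero -> B D.

Lemma loc_sub_hyperring : is_hyperring (loc_ops o S) B.
Proof.
  assert (B_sum : forall X Y Z, B X -> B Y -> ladd X Y Z -> B Z).
  { intros X Y Z hX hY h. apply (B_add X Y); auto. apply (loc_add_frac X Y); auto. }
  split; [auto |]. split; [auto |]. split; [auto |].
  split. { intros X Y hX hY. destruct (B_frac _ hX) as [a [b [hb ->]]].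
    destruct (B_frac _ hY) as [c [d [hd ->]]].
    destruct (add_nonempty (a * d) (b * c)) as [y hy].
    exists (cls y (b * d)). assert (h := add_cls _ _ _ _ _ hb hd hy). eauto. }
  split. { intros; apply loc_addC; auto. }
  split. { intros X Y Z E hX hY hZ hE. split.
    - intros [D [_ [h1 h2]]].
      destruct (loc_addA_l X Y Z E) as [D' [h1' h2']]; eauto.
    - intros [D [_ [h1 h2]]].
      destruct (loc_addA_r X Y Z E) as [D' [h1' h2']]; eauto. }
  split. { intros; apply loc_add0; auto. }
  split. { intros Z hZ hP. assert (h := proj2 (hP _ _ B_zero B_zero) eq_refl).
    apply loc_addC, loc_add0 in h; auto. }
  split. { intros X hX. destruct (B_frac _ hX) as [a [b [hb ->]]].
    exists (cls (neg a) b). assert (h := loc_add_neg a b hb).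
    split; [eapply B_neg; eauto |]. split; auto.
    intros Y hY h'. apply loc_neg_unique; auto. }
  split. { intros; apply loc_add_reverse; auto. }
  split. { intros X Y Z hX hY hZ.
    destruct (B_frac _ hX) as [a [b [hb ->]]], (B_frac _ hY) as [c [d [hd ->]]],
      (B_frac _ hZ) as [e [f [hf ->]]].
    rewrite !mul_cls by auto. apply cls_eqE; auto; monoid_eq. }
  split. { intros X Y hX hY.
    destruct (B_frac _ hX) as [a [b [hb ->]]], (B_frac _ hY) as [c [d [hd ->]]].
    rewrite !mul_cls by auto. apply cls_eqE; auto; monoid_eq. }
  split. { intros X hX. destruct (B_frac _ hX) as [a [b [hb ->]]]. simpl hone.
    rewrite mul_cls by auto. apply cls_eqE; auto; monoid_eq. }
  split. { intros X Y Z C hX hY hZ hC. rewrite <- loc_mul_addr by auto. split.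
    - intros [W [hW [h ->]]]. eauto.
    - intros [W [h ->]]. eauto 6. }
  split. { intros X hX. destruct (B_frac _ hX) as [a [b [hb ->]]]. simpl hzero.
    rewrite mul_cls by auto. apply cls_eqE; auto. now rewrite !mul0. }
  simpl. intro e. apply cls_eqE in e; auto. rewrite !mulr1 in e. now apply zero_neq_one.
Qed.
End SubLocalization.

Lemma loc_hyperring : is_hyperring (loc_ops o S) frac.
Proof. apply loc_sub_hyperring; auto using loc_mul_frac. Qed.

End Localization.
Local Hint Resolve in_cls_refl is_frac_cls : core.

Lemma nz_mult_system_Snz : nz_mult_system (Snz o).
Proof.
  split; [intro h; now apply zero_neq_one |].
  split; [intros a b; apply mul_neq0 | auto].
Qed.

(** * Hyperideals and the prime spectrum *)

Definition hideal_closed (A : R -> Prop) : Prop :=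
  forall a b r n c, A a -> A b -> add (r * b) n zero -> add a n c -> A c.

Lemma hideal_zero I : is_hideal o I -> I zero.
Proof.
  intros [[a ha] hI]. apply (hI a a one (neg a) zero); auto.
  - rewrite mul1; apply add_neg.
  - apply add_neg.
Qed.

Lemma hideal_mul I r x : is_hideal o I -> I x -> I (r * x).
Proof.
  intros hI hx. apply ((proj2 hI) zero x (neg r) (r * x) (r * x)); auto.
  - apply hideal_zero; auto.
  - rewrite mulNr. apply addC, add_neg.
  - apply add0l; auto.
Qed.

Lemma hideal_closed_colon A y : is_hideal o A -> hideal_closed (fun x => A (x * y)).
Proof.
  intros hA a b t n c ha hb hn hc.
  apply ((proj2 hA) (a * y) (b * y) t (n * y) (c * y)); auto.
  - apply (add_mull y) in hn. rewrite mulr0 in hn.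
    replace (t * (b * y)) with (y * (t * b)) by monoid_eq.
    replace (n * y) with (y * n) by monoid_eq; auto.
  - apply (add_mull y) in hc.
    replace (a * y) with (y * a) by monoid_eq. replace (n * y) with (y * n) by monoid_eq.
    replace (c * y) with (y * c) by monoid_eq; auto.
Qed.

Section PrimeAvoidance.
Variables (J S : R -> Prop).
Hypothesis hJ : is_hideal o J.
Hypothesis S_one : S one.
Hypothesis S_mul : forall a b, S a -> S b -> S (a * b).
Hypothesis JS : forall x, S x -> ~ J x.

(* The empty set is admitted because Zorn's lemma also asks for an upper bound
   of the empty chain. *)
Definition avoiding_extension (A : R -> Prop) : Prop :=
  ((forall x, J x -> A x) \/ (forall x, ~ A x)) /\ (forall x, S x -> ~ A x) /\ hideal_closed A.

Lemma avoiding_extension_chain (F : classical_sets.set (classical_sets.set R)) :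
  classical_sets.subset F avoiding_extension ->
  classical_sets.total_on F classical_sets.subset ->
  avoiding_extension (classical_sets.bigcup F (fun X => X)).
Proof.
  intros hF htot. unfold classical_sets.bigcup, classical_sets.mkset. split; [| split].
  - destruct (classic (exists X, F X /\ forall x, J x -> X x)) as [[X [hX hJX]] | hn].
    + left. intros x hx. exists X; auto.
    + right. intros x [X hX hx].
      destruct (hF X hX) as [[hJX | he] _]; [apply hn; eauto | exact (he x hx)].
  - intros x hx [X hX hXx]. exact (proj1 (proj2 (hF X hX)) x hx hXx).
  - intros a b t n c [X1 h1 ha] [X2 h2 hb] hn hc.
    destruct (htot X1 X2 h1 h2) as [s12 | s21].
    + exists X2; auto. apply (proj2 (proj2 (hF X2 h2)) a b t n c); auto.
    + exists X1; auto. apply (proj2 (proj2 (hF X1 h1)) a b t n c); auto.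
Qed.

Lemma prime_avoiding :
  exists P, is_prime o P /\ (forall x, J x -> P x) /\ (forall x, S x -> ~ P x).
Proof.
  destruct (classical_sets.Zorn_bigcup avoiding_extension_chain)
    as [A [[hJA [hAS hA]] hmax]].
  assert (JA : forall x, J x -> A x).
  { destruct hJA as [h | he]; auto. exfalso. apply (hmax J).
    - split; [intros x hx; destruct (he x hx) |].
      intro h. apply (he zero), h, hideal_zero, hJ.
    - split; [left |]; auto. split; [auto | exact (proj2 hJ)]. }
  assert (hidA : is_hideal o A).
  { destruct hJ as [[x hx] _]. split; eauto. }
  assert (colon : forall y x, A (x * y) -> ~ A x -> exists s, S s /\ A (s * y)).
  { intros y x hx hnx. apply NNPP. intro hn. apply (hmax (fun x => A (x * y))).
    - split; [intros z hz; rewrite mulC; apply hideal_mul; auto |].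
      intro h. apply hnx, h, hx.
    - split; [left; intros z hz; rewrite mulC; apply hideal_mul; auto |].
      split; [intros s hs hsy; eauto | apply hideal_closed_colon; auto]. }
  exists A. split; [| split; auto]. split; [auto | split].
  - exists one. apply hAS; auto.
  - intros a b hab. apply NNPP; intro hn. apply not_or_and in hn. destruct hn as [ha hb].
    destruct (colon b a hab ha) as [s [hs hsb]].
    destruct (colon s b) as [t [ht hts]]; [rewrite mulC; auto | auto |].
    apply (hAS (t * s)); auto.
Qed.
End PrimeAvoidance.

Lemma prime_zero (p : spec o) : proj1_sig p zero.
Proof. apply hideal_zero, (proj2_sig p). Qed.

Lemma prime_mul_notin (p : spec o) a b : ~ proj1_sig p a -> ~ proj1_sig p b -> ~ proj1_sig p (a * b).
Proof. intros ha hb h. destruct (proj2 (proj2 (proj2_sig p)) _ _ h); auto. Qed.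

Lemma prime_notin_one (p : spec o) : ~ proj1_sig p one.
Proof.
  destruct (proj1 (proj2 (proj2_sig p))) as [x hx]. intro h. apply hx.
  rewrite <- (mulr1 x). apply hideal_mul; auto. apply (proj2_sig p).
Qed.

Lemma prime_notin_neq0 (p : spec o) a : ~ proj1_sig p a -> a <> zero.
Proof. intros h ->. apply h, prime_zero. Qed.

Lemma nz_mult_system_Sprime (p : spec o) : nz_mult_system (Sprime o p).
Proof. split; [apply prime_notin_one | split; [apply prime_mul_notin | apply prime_notin_neq0]]. Qed.

Local Hint Resolve nz_mult_system_Snz nz_mult_system_Sprime : core.

Lemma Dset_mul_l (q : spec o) a b : Dset o (a * b) q -> Dset o a q.
Proof. intros h ha. apply h. rewrite mulC. apply hideal_mul; auto. apply (proj2_sig q). Qed.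

Lemma Dset_mul_r (q : spec o) a b : Dset o (a * b) q -> Dset o b q.
Proof. intros h hb. apply h. apply hideal_mul; auto. apply (proj2_sig q). Qed.

Definition principal (g : R) : R -> Prop := fun x => exists r, x = r * g.

Lemma principal_hideal g : is_hideal o (principal g).
Proof.
  split; [exists g, one; now rewrite mul1 |].
  intros a b r n c [r1 ->] [r2 ->] hn hc. apply neg_unique in hn. subst n.
  replace (neg (r * (r2 * g))) with (g * neg (r * r2)) in hc by (rewrite mulrN; f_equal; monoid_eq).
  replace (r1 * g) with (g * r1) in hc by monoid_eq.
  apply mul_addr in hc. destruct hc as [w [_ ->]]. exists w; apply mulC.
Qed.

Lemma zopen_Dset g : zopen o (Dset o g).
Proof.
  exists (principal g). split; [apply principal_hideal |]. intro p. unfold Dset, Vset. split.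
  - intros h hV. apply h, hV. exists one; now rewrite mul1.
  - intros h hg. apply h. intros x [r ->]. apply hideal_mul; auto. apply (proj2_sig p).
Qed.

Lemma zopen_full : zopen o (full (spec o)).
Proof.
  exists (principal one). split; [apply principal_hideal |]. intro p. split; intros _; [| exact I].
  intro hv. apply (prime_notin_one p), hv. exists one; now rewrite mul1.
Qed.

Lemma is_prime_zero : is_prime o (fun x => x = zero).
Proof.
  split; [split; [exists zero; auto |] | split].
  - intros a b r n c -> -> hn hc. rewrite mulr0 in hn. apply add0l in hn. subst.
    apply add0l in hc; auto.
  - exists one. intro e. now apply zero_neq_one.
  - intros a b h. apply mul_eq0; auto.
Qed.

Definition generic_point : spec o := exist _ (fun x => x = zero) is_prime_zero.

Lemma zopen_generic_point V q : zopen o V -> V q -> V generic_point.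
Proof.
  intros [I [hI hV]] hq. apply hV in hq. apply hV. intro h. apply hq. intros x hx.
  apply NNPP. intro hx'. exact (prime_notin_neq0 q x hx' (h x hx)).
Qed.

Lemma zopen_Dset_basis U q : zopen o U -> U q ->
  exists g, ~ proj1_sig q g /\ forall p, Dset o g p -> U p.
Proof.
  intros [I [hI hV]] hq. apply hV in hq. apply not_all_ex_not in hq. destruct hq as [x hx].
  exists x. split; [tauto |]. intros p hp. apply hV. intro h. apply hp, h. tauto.
Qed.

Lemma hpow_add f n m : hpow o f (n + m) = hpow o f n * hpow o f m.
Proof. induction n; simpl. - now rewrite mul1. - now rewrite IHn, mulA. Qed.

Lemma hpow_neq0 f n : f <> zero -> hpow o f n <> zero.
Proof. intro h; induction n; simpl; [intro e; now apply zero_neq_one | apply mul_neq0; auto]. Qed.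

Lemma hpow_notin_prime (p : spec o) f n : ~ proj1_sig p f -> ~ proj1_sig p (hpow o f n).
Proof. intro h; induction n; simpl; [apply prime_notin_one | apply prime_mul_notin; auto]. Qed.

Lemma hpow_one n : hpow o one n = one.
Proof. induction n; simpl; auto. now rewrite IHn, mul1. Qed.

Lemma nz_mult_system_Spow f : f <> zero -> nz_mult_system (Spow o f).
Proof.
  intro hf. split; [exists 0; auto | split].
  - intros a b [n ->] [m ->]. exists (n + m). now rewrite hpow_add.
  - intros a [n ->]. apply hpow_neq0; auto.
Qed.

Definition denominators (r s : R) : R -> Prop := fun b => exists c, b * r = c * s.

Lemma denominators_hideal r s : s <> zero -> is_hideal o (denominators r s).
Proof.
  intro hs. split; [exists zero, zero; now rewrite !mul0 |].
  intros a b t n c [c1 e1] [c2 e2] hn hc. apply neg_unique in hn. subst n.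
  apply (add_mull r) in hc.
  replace (r * a) with (s * c1) in hc by (transitivity (c1 * s); [| rewrite <- e1]; monoid_eq).
  replace (r * neg (t * b)) with (s * neg (t * c2)) in hc
    by (rewrite !mulrN; f_equal; transitivity (t * (c2 * s)); [| rewrite <- e2]; monoid_eq).
  apply mul_addr in hc. destruct hc as [w [_ e]]. exists w. rewrite mulC, e. apply mulC.
Qed.

(* If no power of [f] is a denominator of [u], the denominators of [u] lie in a
   prime of [D(f)] by prime avoidance, and [u] is not regular there. *)
Lemma frac_regular_on_Dset f u : f <> zero -> is_frac o (Snz o) u ->
  (forall q : spec o, ~ proj1_sig q f -> exists a b, ~ proj1_sig q b /\ u = cls o (Snz o) a b) ->
  exists a n, u = cls o (Snz o) a (hpow o f n).
Proof.
  intros hf [r [s [hs ->]]] hreg.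
  destruct (classic (exists n, denominators r s (hpow o f n))) as [[n [c hc]] | hno].
  { exists c, n. assert (hfn : Snz o (hpow o f n)) by now apply hpow_neq0.
    apply cls_eqE; auto. now rewrite mulC. }
  destruct (prime_avoiding (denominators r s) (Spow o f)) as [P [hP [hJP hSP]]].
  - apply denominators_hideal; auto.
  - exists 0; auto.
  - apply (nz_mult_system_Spow f hf).
  - intros x [n ->] hx. eauto.
  - destruct (hreg (exist _ P hP)) as [a [b [hb e]]].
    + intro hfP. apply (hSP f); auto. exists 1. simpl. now rewrite mulr1.
    + exfalso. apply hb, hJP. apply cls_eqE in e; auto; [| exact (prime_notin_neq0 (exist _ P hP) b hb)].
      exists a. now rewrite mulC.
Qed.

(** * Sections of the structure sheaf *)

Lemma cls_restrict S a b : nz_mult_system S -> S b ->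
  cls o S a b = fun pr => cls o (Snz o) a b pr /\ S (snd pr).
Proof.
  intros HS hb. assert (hb' : Snz o b) by (apply HS; auto).
  apply functional_extensionality; intros [r s]. apply propositional_extensionality.
  rewrite (in_clsE S HS), (in_clsE (Snz o)) by auto. simpl. split.
  - intros [hs e]; repeat split; auto. apply HS; auto.
  - intros [[_ e] hs]; auto.
Qed.

Lemma frac_snd_neq0 u pr : is_frac o (Snz o) u -> u pr -> snd pr <> zero.
Proof. intros [a [b [hb ->]]] h. destruct pr as [r s]. apply in_clsE in h; [apply h | |]; auto. Qed.

Lemma frac_cls_of_in u pr : is_frac o (Snz o) u -> u pr -> u = cls o (Snz o) (fst pr) (snd pr).
Proof. intros [a [b [hb ->]]] h. destruct pr as [r s]. apply cls_of_in; auto. Qed.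

(* The section given by [u] in [K]: at [q], the representatives of [u] whose
   denominator avoids [q], i.e. the image of [u] in [R_q]. *)
Definition sec_of_frac (U : spec o -> Prop) (u : R * R -> Prop) : secT o U :=
  fun q pr => u pr /\ Sprime o (proj1_sig q) (snd pr).

Definition frac_of_sec (U : spec o -> Prop) (s : secT o U) : R * R -> Prop :=
  fun pr => exists q, s q pr.

Lemma sec_mulE U (s t : secT o U) q :
  hmul (sec_ops o U) s t q = hmul (loc_ops o (Sprime o (proj1_sig q))) (s q) (t q).
Proof. reflexivity. Qed.

Lemma sec_addE U (s t r : secT o U) :
  hadd (sec_ops o U) s t r <->
  forall q, hadd (loc_ops o (Sprime o (proj1_sig q))) (s q) (t q) (r q).
Proof. reflexivity. Qed.

Lemma sec_of_frac_cls U u a b (q : {p : spec o | U p}) :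
  u = cls o (Snz o) a b -> ~ proj1_sig (proj1_sig q) b ->
  sec_of_frac U u q = cls o (Sprime o (proj1_sig q)) a b.
Proof. intros -> hb. rewrite (cls_restrict _ a b (nz_mult_system_Sprime _) hb). reflexivity. Qed.

Lemma Yset_zero U : Yset o U (cls o (Snz o) zero one).
Proof.
  split; [exists zero, one; split; [exact (proj1 nz_mult_system_Snz) | reflexivity] |].
  intros p _. exists zero, one. split; [apply prime_notin_one | reflexivity].
Qed.

Lemma Yset_one U : Yset o U (cls o (Snz o) one one).
Proof.
  split; [exists one, one; split; [exact (proj1 nz_mult_system_Snz) | reflexivity] |].
  intros p _. exists one, one. split; [apply prime_notin_one | reflexivity].
Qed.

Lemma Yset_mul U u v : Yset o U u -> Yset o U v -> Yset o U (hmul (loc_ops o (Snz o)) u v).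
Proof.
  intros [hfu hu] [hfv hv]. split; [apply loc_mul_frac; auto |].
  intros p hp. destruct (hu _ hp) as [a [b [hb ->]]], (hv _ hp) as [c [d [hd ->]]].
  exists (a * c), (b * d). split; [apply prime_mul_notin; auto |].
  apply mul_cls; auto; eapply prime_notin_neq0; eauto.
Qed.

Lemma Yset_add U u v w : Yset o U u -> Yset o U v -> is_frac o (Snz o) w ->
  hadd (loc_ops o (Snz o)) u v w -> Yset o U w.
Proof.
  intros [hfu hu] [hfv hv] hw h. split; auto.
  intros p hp. destruct (hu _ hp) as [a [b [hb ->]]], (hv _ hp) as [c [d [hd ->]]].
  apply add_clsE in h; auto; try (eapply prime_notin_neq0; eauto).
  destruct h as [y [_ ->]]. exists y, (b * d). split; [apply prime_mul_notin | ]; auto.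
Qed.

Lemma Yset_neg U u v : Yset o U u -> is_frac o (Snz o) v ->
  hadd (loc_ops o (Snz o)) u v (hzero (loc_ops o (Snz o))) -> Yset o U v.
Proof.
  intros [hfu hu] hv h. split; auto.
  intros p hp. destruct (hu _ hp) as [a [b [hb ->]]]. exists (neg a), b. split; auto.
  apply loc_neg_unique; auto. eapply prime_notin_neq0; eauto.
Qed.

Lemma Yset_frac U u : Yset o U u -> is_frac o (Snz o) u.
Proof. intros [h _]; exact h. Qed.

Lemma Yset_hyperring U : is_hyperring (loc_ops o (Snz o)) (Yset o U).
Proof.
  apply loc_sub_hyperring; [auto | apply Yset_frac | apply Yset_zero | apply Yset_one
                           | apply Yset_mul | apply Yset_add | apply Yset_neg].
Qed.

Lemma Yset_sub_hyperring U : is_sub_hyperring (loc_ops o (Snz o)) (is_frac o (Snz o)) (Yset o U).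
Proof.
  split; [apply Yset_frac |]. split; [apply Yset_zero |]. split; [apply Yset_one |].
  split; [apply Yset_mul |]. split; [apply Yset_add |]. split; [apply Yset_neg |].
  apply Yset_hyperring.
Qed.

Section SectionsOverOpen.
Variable U : spec o -> Prop.
Hypothesis hU : zopen o U.
Hypothesis hUe : U generic_point.
Let qe : {p : spec o | U p} := exist _ generic_point hUe.

Lemma sec_of_frac_generic u : is_frac o (Snz o) u -> sec_of_frac U u qe = u.
Proof.
  intro hu. apply functional_extensionality; intro pr. apply propositional_extensionality.
  unfold sec_of_frac, Sprime; simpl. split; [tauto |].
  intro h; split; auto. exact (frac_snd_neq0 u pr hu h).
Qed.

Lemma sec_of_fracK u : is_frac o (Snz o) u -> frac_of_sec U (sec_of_frac U u) = u.
Proof.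
  intro hu. apply functional_extensionality; intro pr. apply propositional_extensionality.
  split; [intros [q [h _]]; auto |]. intro h. exists qe. rewrite sec_of_frac_generic; auto.
Qed.

Lemma sec_of_frac_section u : Yset o U u -> is_section o U (sec_of_frac U u).
Proof.
  intros [hf hY]. split.
  - intro q. destruct (hY _ (proj2_sig q)) as [a [b [hb e]]].
    exists a, b. split; [exact hb | apply sec_of_frac_cls; auto].
  - intro q. destruct (hY _ (proj2_sig q)) as [a [b [hb e]]].
    destruct (zopen_Dset_basis U (proj1_sig q) hU (proj2_sig q)) as [x [hx hxU]].
    exists (Dset o (b * x)). split; [apply zopen_Dset |].
    split; [apply prime_mul_notin; auto |].
    split; [intros p hp; apply hxU; eapply Dset_mul_r; eauto |].
    exists a, b. intros q' hq'.
    assert (hb' : ~ proj1_sig (proj1_sig q') b) by exact (Dset_mul_l _ _ _ hq').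
    split; [exact hb' | apply sec_of_frac_cls; auto].
Qed.

(* A section is determined by its germ at the generic point, which lies in
   every nonempty open set. *)
Lemma section_represented s : is_section o U s ->
  Yset o U (frac_of_sec U s) /\ s = sec_of_frac U (frac_of_sec U s).
Proof.
  intros [hf hl].
  assert (key : forall q : {p : spec o | U p}, exists a f, ~ proj1_sig (proj1_sig q) f /\
      s qe = cls o (Snz o) a f /\ s q = cls o (Sprime o (proj1_sig q)) a f).
  { intro q. destruct (hl q) as [V [hV [hVq [_ [a [f hf']]]]]]. exists a, f.
    destruct (hf' q hVq) as [h1 h2]. split; [exact h1 | split; [| exact h2]].
    exact (proj2 (hf' qe (zopen_generic_point V _ hV hVq))). }
  assert (hfe : is_frac o (Snz o) (s qe)).
  { destruct (key qe) as [a [f [h1 [h2 _]]]]. exists a, f. split; [exact (prime_notin_neq0 _ _ h1) | exact h2]. }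
  assert (E : s = sec_of_frac U (s qe)).
  { apply functional_extensionality; intro q. destruct (key q) as [a [f [h1 [h2 h3]]]].
    rewrite h3. symmetry; apply sec_of_frac_cls; auto. }
  assert (E2 : frac_of_sec U s = s qe) by (rewrite E at 1; apply sec_of_fracK; auto).
  rewrite E2. split; auto. split; auto. intros p hp.
  destruct (key (exist _ p hp)) as [a [f [h1 [h2 _]]]]. exists a, f; auto.
Qed.

Lemma sec_of_frac_mul u v : Yset o U u -> Yset o U v ->
  hmul (sec_ops o U) (sec_of_frac U u) (sec_of_frac U v)
  = sec_of_frac U (hmul (loc_ops o (Snz o)) u v).
Proof.
  intros [hfu hu] [hfv hv]. apply functional_extensionality; intro q. rewrite sec_mulE.
  destruct (hu _ (proj2_sig q)) as [a [b [hb eu]]], (hv _ (proj2_sig q)) as [c [d [hd ev]]].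
  rewrite (sec_of_frac_cls U u a b q eu hb), (sec_of_frac_cls U v c d q ev hd), mul_cls by auto.
  symmetry. apply sec_of_frac_cls; [| apply prime_mul_notin; auto].
  rewrite eu, ev. apply mul_cls; auto; eapply prime_notin_neq0; eauto.
Qed.

Lemma sec_of_frac_add u v w : Yset o U u -> Yset o U v -> Yset o U w ->
  (hadd (loc_ops o (Snz o)) u v w <->
   hadd (sec_ops o U) (sec_of_frac U u) (sec_of_frac U v) (sec_of_frac U w)).
Proof.
  intros [hfu hu] [hfv hv] [hfw hw]. split.
  - intro h. apply sec_addE. intro q.
    destruct (hu _ (proj2_sig q)) as [a [b [hb eu]]], (hv _ (proj2_sig q)) as [c [d [hd ev]]].
    rewrite (sec_of_frac_cls U u a b q eu hb), (sec_of_frac_cls U v c d q ev hd).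
    rewrite eu, ev in h. apply add_clsE in h; auto; try (eapply prime_notin_neq0; eauto).
    destruct h as [y [hy ew]].
    rewrite (sec_of_frac_cls U w y (b * d) q ew (prime_mul_notin _ _ _ hb hd)).
    apply add_cls; auto.
  - intro h. apply sec_addE with (q := qe) in h. rewrite !sec_of_frac_generic in h; auto.
Qed.

Lemma sec_of_frac_hom : is_hom (loc_ops o (Snz o)) (Yset o U) (sec_ops o U) (is_section o U)
  (sec_of_frac U).
Proof.
  split; [exact sec_of_frac_section |].
  split; [intros; apply sec_of_frac_add; auto | intros; symmetry; apply sec_of_frac_mul; auto].
Qed.

Lemma frac_of_sec_hom : is_hom (sec_ops o U) (is_section o U) (loc_ops o (Snz o)) (Yset o U)
  (frac_of_sec U).
Proof.
  split; [intros s hs; apply section_represented; auto |]. split.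
  - intros s1 s2 s3 h1 h2 h3 h.
    destruct (section_represented _ h1) as [y1 e1], (section_represented _ h2) as [y2 e2],
      (section_represented _ h3) as [y3 e3].
    apply sec_of_frac_add; auto. rewrite <- e1, <- e2, <- e3; auto.
  - intros s1 s2 h1 h2.
    destruct (section_represented _ h1) as [y1 e1], (section_represented _ h2) as [y2 e2].
    set (u1 := frac_of_sec U s1) in *. set (u2 := frac_of_sec U s2) in *.
    rewrite e1, e2, sec_of_frac_mul by auto.
    rewrite !sec_of_fracK; auto; apply (Yset_frac U); auto using Yset_mul.
Qed.

Lemma sections_iso_Yset : hiso (sec_ops o U) (is_section o U) (loc_ops o (Snz o)) (Yset o U).
Proof.
  exists (frac_of_sec U), (sec_of_frac U).
  split; [exact frac_of_sec_hom |]. split; [exact sec_of_frac_hom |]. split.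
  - intros s hs; symmetry; apply section_represented; auto.
  - intros u hu; apply sec_of_fracK, (Yset_frac U), hu.
Qed.

Lemma sections_hyperring : is_hyperring (sec_ops o U) (is_section o U).
Proof.
  assert (hzero_sec : hzero (sec_ops o U) = sec_of_frac U (cls o (Snz o) zero one)).
  { apply functional_extensionality; intro q. symmetry. apply sec_of_frac_cls; auto.
    apply prime_notin_one. }
  assert (hone_sec : hone (sec_ops o U) = sec_of_frac U (cls o (Snz o) one one)).
  { apply functional_extensionality; intro q. symmetry. apply sec_of_frac_cls; auto.
    apply prime_notin_one. }
  apply (is_hyperring_of_iso _ _ _ _ (loc_ops o (Snz o)) (Yset o U) (frac_of_sec U) (sec_of_frac U)).
  - apply Yset_hyperring.
  - exact frac_of_sec_hom.
  - exact sec_of_frac_hom.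
  - intros s hs; symmetry; apply section_represented; auto.
  - intros u hu; apply sec_of_fracK, (Yset_frac U), hu.
  - rewrite hzero_sec. apply sec_of_frac_section, Yset_zero.
  - rewrite hone_sec. apply sec_of_frac_section, Yset_one.
  - rewrite hzero_sec. apply sec_of_fracK, (Yset_frac U), Yset_zero.
  - rewrite hone_sec. apply sec_of_fracK, (Yset_frac U), Yset_one.
Qed.

End SectionsOverOpen.

Lemma Yset_Dset f : f <> zero -> Yset o (Dset o f) = image_Rf o f.
Proof.
  intro hf. apply functional_extensionality; intro u. apply propositional_extensionality. split.
  - intros [hfr hY]. split; auto.
    destruct (frac_regular_on_Dset f u hf hfr) as [a [n e]]; [intros q hq; apply hY; auto |].
    exists a, n. rewrite e. apply in_cls_refl; auto. apply hpow_neq0; auto.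
  - intros [hfr [a [n h]]]. split; auto. intros p hp. exists a, (hpow o f n).
    split; [apply hpow_notin_prime; auto | apply (frac_cls_of_in u (a, hpow o f n)); auto].
Qed.

Lemma Inter_Rf_Yset U : zopen o U -> Inter_Rf o U = Yset o U.
Proof.
  intro hU. apply functional_extensionality; intro u. apply propositional_extensionality. split.
  - intros [hfr hI]. split; auto. intros p hp.
    destruct (zopen_Dset_basis U p hU hp) as [g [hg hgU]].
    destruct (hI g (prime_notin_neq0 _ _ hg) hgU) as [_ [a [n h]]].
    exists a, (hpow o g n). split; [apply hpow_notin_prime; auto |].
    apply (frac_cls_of_in u (a, hpow o g n)); auto.
  - intros [hfr hY]. split; auto. intros f hf hfU. rewrite <- Yset_Dset by auto.
    split; auto.
Qed.

Definition loc_image (S : R -> Prop) : (R * R -> Prop) -> Prop :=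
  fun u => is_frac o (Snz o) u /\ exists a b, S b /\ u = cls o (Snz o) a b.

Definition frac_to_K (C : R * R -> Prop) : R * R -> Prop :=
  cls o (Snz o) (fst (rep o C)) (snd (rep o C)).

Definition frac_of_K (S : R -> Prop) (u : R * R -> Prop) : R * R -> Prop :=
  fun pr => u pr /\ S (snd pr).

Section LocImage.
Variable S : R -> Prop.
Hypothesis HS : nz_mult_system S.
Let SM a b : S a -> S b -> S (a * b). Proof. apply HS. Qed.
Let S_Snz b : S b -> Snz o b. Proof. apply HS. Qed.
Local Hint Resolve SM S_Snz : core.

Lemma frac_to_K_cls a b : S b -> frac_to_K (cls o S a b) = cls o (Snz o) a b.
Proof.
  intro hb. destruct (frac_repE S HS (cls o S a b)) as [e hs]; auto.
  unfold frac_to_K. destruct (rep o (cls o S a b)) as [r s]. simpl in *.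
  apply cls_eqE in e; auto. apply cls_eqE; auto.
Qed.

Lemma frac_of_K_cls a b : S b -> frac_of_K S (cls o (Snz o) a b) = cls o S a b.
Proof. intro hb. symmetry. apply cls_restrict; auto. Qed.

Lemma frac_of_K_hom : is_hom (loc_ops o (Snz o)) (loc_image S) (loc_ops o S) (is_frac o S)
  (frac_of_K S).
Proof.
  split; [| split].
  - intros u [_ [a [b [hb ->]]]]. rewrite frac_of_K_cls; auto.
  - intros u v w [_ [a [b [hb ->]]]] [_ [c [d [hd ->]]]] [_ [e [g [hg ->]]]] h.
    apply add_clsE in h; auto. destruct h as [y [hy E]].
    rewrite E, !frac_of_K_cls by auto. apply add_cls; auto.
  - intros u v [_ [a [b [hb ->]]]] [_ [c [d [hd ->]]]].
    rewrite !mul_cls, !frac_of_K_cls, mul_cls by auto. reflexivity.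
Qed.

Lemma frac_to_K_hom : is_hom (loc_ops o S) (is_frac o S) (loc_ops o (Snz o)) (loc_image S)
  frac_to_K.
Proof.
  split; [| split].
  - intros C [a [b [hb ->]]]. rewrite frac_to_K_cls; auto.
    split; [exists a, b; auto | exists a, b; auto].
  - intros C D E [a [b [hb ->]]] [c [d [hd ->]]] [e [g [hg ->]]] h.
    apply add_clsE in h; auto. destruct h as [y [hy E]].
    rewrite E, !frac_to_K_cls by auto. apply add_cls; auto.
  - intros C D [a [b [hb ->]]] [c [d [hd ->]]].
    rewrite !mul_cls, !frac_to_K_cls, mul_cls by auto. reflexivity.
Qed.

Lemma loc_image_iso : hiso (loc_ops o (Snz o)) (loc_image S) (loc_ops o S) (is_frac o S).
Proof.
  exists (frac_of_K S), frac_to_K.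
  split; [exact frac_of_K_hom | split; [exact frac_to_K_hom | split]].
  - intros u [_ [a [b [hb ->]]]]. rewrite frac_of_K_cls, frac_to_K_cls; auto.
  - intros C [a [b [hb ->]]]. rewrite frac_to_K_cls, frac_of_K_cls; auto.
Qed.
End LocImage.

Lemma image_Rf_loc_image f : f <> zero -> image_Rf o f = loc_image (Spow o f).
Proof.
  intro hf. apply functional_extensionality; intro u. apply propositional_extensionality. split.
  - intros [hfr [a [n h]]]. split; auto. exists a, (hpow o f n).
    split; [exists n; auto | apply (frac_cls_of_in u (a, hpow o f n)); auto].
  - intros [hfr [a [b [[n ->] ->]]]]. split; auto. exists a, n.
    apply in_cls_refl; auto. apply hpow_neq0; auto.
Qed.

Lemma Yset_full_iso : hiso (loc_ops o (Snz o)) (Yset o (full (spec o))) o (full R).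
Proof.
  set (num := fun u : R * R -> Prop => epsilon (inhabits zero) (fun a => u (a, one))).
  assert (hsnz1 : Snz o one) by apply (proj1 nz_mult_system_Snz).
  assert (hY : forall u, Yset o (full (spec o)) u -> u = cls o (Snz o) (num u) one).
  { intros u [hfr hY].
    destruct (frac_regular_on_Dset one u (fun e => zero_neq_one (eq_sym e)) hfr) as [a [n e]].
    { intros q _. apply hY. exact I. }
    rewrite hpow_one in e. assert (h : u (num u, one)).
    { unfold num. apply epsilon_spec. exists a. rewrite e. apply in_cls_refl; auto. }
    apply (frac_cls_of_in u _ hfr h). }
  assert (hYc : forall a, Yset o (full (spec o)) (cls o (Snz o) a one)).
  { intro a. split; [exists a, one; auto |].
    intros p _. exists a, one. split; [apply prime_notin_one | reflexivity]. }
  assert (hnum : forall a, num (cls o (Snz o) a one) = a).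
  { intro a. assert (e := hY _ (hYc a)). apply cls_eqE in e; auto. now rewrite !mulr1 in e. }
  exists num, (fun a => cls o (Snz o) a one). split; [| split; [| split]].
  - split; [intros; exact I | split].
    + intros u v w hu hv hw h. rewrite (hY u hu), (hY v hv), (hY w hw) in h.
      apply add_clsE in h; auto. destruct h as [y [hy e]].
      apply cls_eqE in e; auto; [| apply mul_neq0; auto].
      rewrite !mulr1, !mul1 in *. now rewrite e.
    + intros u v hu hv. rewrite (hY u hu), (hY v hv) at 1. rewrite mul_cls, mul1, hnum by auto.
      reflexivity.
  - split; [intros; apply hYc | split].
    + intros a b c _ _ _ h. apply add_clsE; auto. exists c. rewrite mulr1, mul1. split; auto.
      apply cls_eqE; auto; [apply mul_neq0; auto | now rewrite mul1, !mulr1].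
    + intros a b _ _. rewrite mul_cls, mul1 by auto. reflexivity.
  - intros u hu. symmetry; apply hY; auto.
  - intros a _; apply hnum.
Qed.

Lemma Yset_cls W a b : b <> zero -> (forall q, W q -> ~ proj1_sig q b) ->
  Yset o W (cls o (Snz o) a b).
Proof. intros hb hWb. split; [exists a, b; split; auto |]. intros q hq. exists a, b. split; auto. Qed.

(** * Stalks *)

Lemma section_pointwise U s : U generic_point -> is_section o U s ->
  forall q q' : {x : spec o | U x}, proj1_sig q = proj1_sig q' -> s q = s q'.
Proof.
  intros hUe hs q q' e. rewrite (proj2 (section_represented U hUe s hs)).
  unfold sec_of_frac. now rewrite e.
Qed.

Section Stalk.
Variable p : spec o.
Local Notation Rp := (loc_ops o (Sprime o p)).
Local Notation frac_p := (is_frac o (Sprime o p)).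

Definition germ (U : spec o -> Prop) (s : secT o U) : R * R -> Prop :=
  fun pr => exists q : {x : spec o | U x}, proj1_sig q = p /\ s q pr.

Lemma germE U (hU : zopen o U) (hp : U p) s : is_section o U s -> germ U s = s (exist _ p hp).
Proof.
  intro hs. assert (hUe := zopen_generic_point U p hU hp).
  apply functional_extensionality; intro pr. apply propositional_extensionality. split.
  - intros [q [e h]]. now rewrite (section_pointwise U s hUe hs q (exist _ p hp) e) in h.
  - intro h. exists (exist _ p hp). auto.
Qed.

Lemma nbhd_Dset b : ~ proj1_sig p b -> nbhd o p (Dset o b).
Proof. intro hb. split; [apply zopen_Dset | exact hb]. Qed.

Lemma germ_cocone : is_cocone o p (R * R -> Prop) Rp frac_p germ.
Proof.
  split.
  - intros U [hU hp]. assert (hUe := zopen_generic_point U p hU hp). split; [| split].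
    + intros s hs. rewrite (germE U hU hp s hs). exact (proj1 hs (exist _ p hp)).
    + intros s1 s2 s3 h1 h2 h3 h.
      rewrite (germE U hU hp s1 h1), (germE U hU hp s2 h2), (germE U hU hp s3 h3).
      exact (h (exist _ p hp)).
    + intros s t hs ht.
      assert (hst : is_section o U (hmul (sec_ops o U) s t))
        by (apply (sections_hyperring U hU hUe); auto).
      rewrite (germE U hU hp _ hst), (germE U hU hp s hs), (germE U hU hp t ht). reflexivity.
  - intros U V HVU [hU hp] [hV hpV] s hs. assert (hUe := zopen_generic_point U p hU hp).
    rewrite (germE U hU hp s hs). apply functional_extensionality; intro pr.
    apply propositional_extensionality. unfold restr. split.
    + intro h. exists (exist _ p hpV). split; auto. simpl.
      rewrite (section_pointwise U s hUe hs _ (exist _ p hp)); auto.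
    + intros [q [e h]]. rewrite (section_pointwise U s hUe hs _ (exist _ p hp)) in h; auto.
Qed.

Lemma add_cls_to_K a1 b1 a2 b2 a3 b3 :
  ~ proj1_sig p b1 -> ~ proj1_sig p b2 -> ~ proj1_sig p b3 ->
  hadd Rp (cls o (Sprime o p) a1 b1) (cls o (Sprime o p) a2 b2) (cls o (Sprime o p) a3 b3) ->
  hadd (loc_ops o (Snz o)) (cls o (Snz o) a1 b1) (cls o (Snz o) a2 b2) (cls o (Snz o) a3 b3).
Proof.
  intros h1 h2 h3 h. rewrite <- !(frac_to_K_cls (Sprime o p)) by auto.
  apply (proj1 (proj2 (frac_to_K_hom _ (nz_mult_system_Sprime p)))); auto.
Qed.

Section Universal.
Variables (T : Type) (oT : hops T) (AT : T -> Prop) (psi : forall U, secT o U -> T).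
Hypothesis hcoc : is_cocone o p T oT AT psi.

(* Both sides equal the value of [psi] on [u] over a basic open [D(g1 g2)] inside [U1 ∩ U2]. *)
Lemma cocone_sec_of_frac U1 U2 u : nbhd o p U1 -> nbhd o p U2 -> Yset o U1 u -> Yset o U2 u ->
  psi U1 (sec_of_frac U1 u) = psi U2 (sec_of_frac U2 u).
Proof.
  assert (restrict : forall U W (HWU : forall q, W q -> U q) u, nbhd o p U -> nbhd o p W ->
            Yset o U u -> psi U (sec_of_frac U u) = psi W (sec_of_frac W u)).
  { intros U W HWU v [hU hp] hW hY.
    apply (proj2 hcoc U W HWU (conj hU hp) hW).
    apply sec_of_frac_section; auto. }
  intros [hU1 hp1] [hU2 hp2] hY1 hY2.
  destruct (zopen_Dset_basis U1 p hU1 hp1) as [g1 [hg1 hgU1]].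
  destruct (zopen_Dset_basis U2 p hU2 hp2) as [g2 [hg2 hgU2]].
  set (W := Dset o (g1 * g2)).
  assert (hW : nbhd o p W) by (apply nbhd_Dset, prime_mul_notin; auto).
  assert (HW1 : forall q, W q -> U1 q) by (intros q hq; apply hgU1; eapply Dset_mul_l; eauto).
  assert (HW2 : forall q, W q -> U2 q) by (intros q hq; apply hgU2; eapply Dset_mul_r; eauto).
  now rewrite (restrict U1 W HW1 u (conj hU1 hp1) hW hY1), (restrict U2 W HW2 u (conj hU2 hp2) hW hY2).
Qed.

Definition stalk_lift (C : R * R -> Prop) : T :=
  psi (Dset o (snd (rep o C))) (sec_of_frac (Dset o (snd (rep o C))) (frac_to_K C)).

Lemma stalk_liftE a b W : ~ proj1_sig p b -> nbhd o p W -> Yset o W (cls o (Snz o) a b) ->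
  stalk_lift (cls o (Sprime o p) a b) = psi W (sec_of_frac W (cls o (Snz o) a b)).
Proof.
  intros hb hW hY. unfold stalk_lift.
  destruct (frac_repE _ (nz_mult_system_Sprime p) (cls o (Sprime o p) a b)) as [_ hb']; auto.
  assert (eK := frac_to_K_cls _ (nz_mult_system_Sprime p) a b hb).
  rewrite eK. apply cocone_sec_of_frac; auto using nbhd_Dset.
  unfold frac_to_K in eK. rewrite <- eK. apply Yset_cls; [apply (prime_notin_neq0 p) |]; auto.
Qed.

Lemma stalk_lift_factors : factors o p (R * R -> Prop) germ T psi stalk_lift.
Proof.
  intros U [hU hp] s hs. assert (hUe := zopen_generic_point U p hU hp).
  destruct (section_represented U hUe s hs) as [hY E].
  destruct (proj2 hY p hp) as [a [b [hb eu]]].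
  assert (hgerm : germ U s = cls o (Sprime o p) a b).
  { rewrite (germE U hU hp s hs), E. exact (sec_of_frac_cls U _ a b (exist _ p hp) eu hb). }
  rewrite hgerm, (stalk_liftE a b U), <- eu, <- E; auto.
  - split; auto.
  - now rewrite <- eu.
Qed.

Lemma stalk_lift_hom : is_hom Rp frac_p oT AT stalk_lift.
Proof.
  destruct hcoc as [hhom _].
  assert (hsec : forall b u, ~ proj1_sig p b -> Yset o (Dset o b) u ->
            is_section o (Dset o b) (sec_of_frac (Dset o b) u))
    by (intros; apply sec_of_frac_section; auto using zopen_Dset).
  assert (hgen : forall b, ~ proj1_sig p b -> Dset o b generic_point)
    by (intros b hb; apply (zopen_generic_point _ p); auto using zopen_Dset).
  split; [| split].
  - intros C [a [b [hb ->]]].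
    assert (hY : Yset o (Dset o b) (cls o (Snz o) a b))
      by (apply Yset_cls; [apply (prime_notin_neq0 p) |]; auto).
    rewrite (stalk_liftE a b (Dset o b)); auto using nbhd_Dset.
    apply (hhom _ (nbhd_Dset b hb)); auto.
  - intros C1 C2 C3 [a1 [b1 [hb1 ->]]] [a2 [b2 [hb2 ->]]] [a3 [b3 [hb3 ->]]] h.
    set (b := b1 * (b2 * b3)).
    assert (hb : ~ proj1_sig p b) by (repeat apply prime_mul_notin; auto).
    assert (hY : forall a c, ~ proj1_sig p c -> (forall q, Dset o b q -> Dset o c q) ->
              Yset o (Dset o b) (cls o (Snz o) a c))
      by (intros; apply Yset_cls; [apply (prime_notin_neq0 p) |]; auto).
    assert (Y1 := hY a1 b1 hb1 (fun q => Dset_mul_l q _ _)).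
    assert (Y2 := hY a2 b2 hb2 (fun q hq => Dset_mul_l q _ _ (Dset_mul_r q _ _ hq))).
    assert (Y3 := hY a3 b3 hb3 (fun q hq => Dset_mul_r q _ _ (Dset_mul_r q _ _ hq))).
    rewrite !(stalk_liftE _ _ (Dset o b)); auto using nbhd_Dset.
    apply (hhom _ (nbhd_Dset b hb)); auto.
    apply sec_of_frac_add; auto using zopen_Dset. apply add_cls_to_K; auto.
  - intros C1 C2 [a1 [b1 [hb1 ->]]] [a2 [b2 [hb2 ->]]].
    set (b := b1 * b2).
    assert (hb : ~ proj1_sig p b) by (apply prime_mul_notin; auto).
    assert (hY : forall a c, ~ proj1_sig p c -> (forall q, Dset o b q -> Dset o c q) ->
              Yset o (Dset o b) (cls o (Snz o) a c))
      by (intros; apply Yset_cls; [apply (prime_notin_neq0 p) |]; auto).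
    assert (Y1 := hY a1 b1 hb1 (fun q => Dset_mul_l q _ _)).
    assert (Y2 := hY a2 b2 hb2 (fun q => Dset_mul_r q _ _)).
    assert (Y12 := hY (a1 * a2) b hb (fun q hq => hq)).
    rewrite mul_cls by auto.
    rewrite !(stalk_liftE _ _ (Dset o b)); auto using nbhd_Dset.
    rewrite <- (mul_cls (Snz o)) by (auto; eapply prime_notin_neq0; eauto).
    rewrite <- sec_of_frac_mul by auto.
    apply (hhom _ (nbhd_Dset b hb)); auto.
Qed.
End Universal.

Lemma germ_colimit : is_stalk_colimit o p Rp frac_p germ.
Proof.
  split; [apply loc_hyperring; auto |]. split; [exact germ_cocone |].
  intros T oT AT psi _ hcoc. split.
  - exists (stalk_lift T psi). split; [exact (stalk_lift_hom T oT AT psi hcoc) |].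
    exact (stalk_lift_factors T oT AT psi hcoc).
  - intros h1 h2 _ _ f1 f2 C [a [b [hb ->]]].
    assert (hs : is_section o (Dset o b) (sec_of_frac (Dset o b) (cls o (Snz o) a b))).
    { apply sec_of_frac_section; [apply zopen_Dset |].
      apply Yset_cls; [apply (prime_notin_neq0 p) |]; auto. }
    assert (eC : germ (Dset o b) (sec_of_frac (Dset o b) (cls o (Snz o) a b)) = cls o (Sprime o p) a b).
    { rewrite (germE _ (zopen_Dset b) hb _ hs). apply sec_of_frac_cls; auto. }
    rewrite <- eC, <- (f1 _ (nbhd_Dset b hb) _ hs), <- (f2 _ (nbhd_Dset b hb) _ hs). reflexivity.
Qed.
End Stalk.
End Hyperdomain.

Theorem theorem4p23 (R : Type) (o : hops R) :
  is_hyperdomain o (full R) ->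
  (* (1) *)
  ((forall f : R, f <> hzero o ->
      is_hyperring (sec_ops o (Dset o f)) (is_section o (Dset o f)) /\
      hiso (sec_ops o (Dset o f)) (is_section o (Dset o f))
           (loc_ops o (Spow o f)) (is_frac o (Spow o f))) /\
   hiso (sec_ops o (full (spec o))) (is_section o (full (spec o))) o (full R)) /\
  (* (2) *)
  (forall U : spec o -> Prop, zopen o U -> (exists p, U p) ->
      is_hyperring (sec_ops o U) (is_section o U) /\
      is_sub_hyperring (loc_ops o (Snz o)) (is_frac o (Snz o)) (Yset o U) /\
      hiso (sec_ops o U) (is_section o U) (loc_ops o (Snz o)) (Yset o U) /\
      is_sub_hyperring (loc_ops o (Snz o)) (is_frac o (Snz o)) (Inter_Rf o U) /\
      hiso (sec_ops o U) (is_section o U) (loc_ops o (Snz o)) (Inter_Rf o U)) /\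
  (* (3) *)
  (forall p : spec o,
      exists (L : Type) (oL : hops L) (AL : L -> Prop) (phi : forall U, secT o U -> L),
        is_stalk_colimit o p oL AL phi /\
        hiso oL AL (loc_ops o (Sprime o p)) (is_frac o (Sprime o p))).
Proof.
  intro HD. split; [split | split].
  - intros f hf. assert (hD := zopen_Dset R o HD f).
    assert (hDe : Dset o f (generic_point R o HD)) by exact hf.
    split; [apply (sections_hyperring R o HD); auto |].
    apply hiso_trans with (R * R -> Prop) (loc_ops o (Snz o)) (Yset o (Dset o f)); [apply (sections_iso_Yset R o HD); auto |].
    rewrite (Yset_Dset R o HD), (image_Rf_loc_image R o HD) by auto.
    apply (loc_image_iso R o HD), (nz_mult_system_Spow R o HD); auto.
  - apply hiso_trans with (R * R -> Prop) (loc_ops o (Snz o)) (Yset o (full (spec o))).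
    + apply (sections_iso_Yset R o HD); [apply (zopen_full R o HD) | exact I].
    + apply (Yset_full_iso R o HD); auto.
  - intros U hU [q hq]. assert (hUe := zopen_generic_point R o HD U q hU hq).
    rewrite (Inter_Rf_Yset R o HD) by auto.
    split; [apply (sections_hyperring R o HD); auto |].
    split; [apply (Yset_sub_hyperring R o HD); auto |].
    split; [apply (sections_iso_Yset R o HD); auto |].
    split; [apply (Yset_sub_hyperring R o HD); auto | apply (sections_iso_Yset R o HD); auto].
  - intro p. exists (R * R -> Prop), (loc_ops o (Sprime o p)), (is_frac o (Sprime o p)), (germ R o p).
    split; [apply (germ_colimit R o HD); auto | apply hiso_refl].
Qed.
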